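(* For every $n\ge 1$, the burning number of the directed path $P_n$ on $n$ nodes is $\left\lceil \sqrt{2n+\tfrac14}-\tfrac12\right\rceil$.
   Context: Burning process on a digraph $D$: a sequence $(x_1,\ldots,x_b)$ of nodes is a burning sequence for $D$ if after $b$ steps of the following process every node of $D$ is burned; the $i$-th step consists of first burning all out-neighbours of all currently burned nodes, and then burning the node $x_i$. The burning number of $D$ is the length of a shortest burning sequence. Equivalently, with $N^+_k(v)$ the set of nodes reachable from $v$ by a directed path with at most $k$ arcs, the burning number is the least $b$ such that there are nodes $v_1,\ldots,v_b$ with $V(D)=\bigcup_{i=1}^b N^+_{i-1}(v_i)$. *)

From HB Require Import structures.
From mathcomp Require Import all_boot all_order all_algebra.
From mathcomp Require Import reals.
Set Implicit Arguments. Unset Strict Implicit. Unset Printing Implicit Defensive.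

(* A digraph is a finite type T with an arc relation e : rel T (e u v = arc u->v). *)

(* reach_le e k v w : w is reachable from v by a directed path with at most k arcs,
   i.e. w \in N^+_k(v). *)
Fixpoint reach_le (T : finType) (e : rel T) (k : nat) (v w : T) : bool :=
  match k with
  | 0 => w == v
  | k'.+1 => reach_le e k' v w || [exists u, reach_le e k' v u && e u w]
  end.

(* s = (x_1,...,x_b) (stored 0-indexed) is a burning sequence:
   V(D) = \bigcup_{i=1}^b N^+_{i-1}(x_i). *)
Definition burning_seq (T : finType) (e : rel T) (s : seq T) : Prop :=
  forall w : T, exists2 i : nat, i < size s & reach_le e i (nth w s i) w.

Definition is_burning_number (T : finType) (e : rel T) (b : nat) : Prop :=
  (exists s : seq T, size s = b /\ burning_seq e s) /\
  (forall s : seq T, burning_seq e s -> b <= size s).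

Definition dpath (n : nat) : rel 'I_n := fun i j => val j == (val i).+1.
Arguments dpath n : clear implicits.

(* Fire i (0-indexed) of a burning sequence of the directed path burns exactly
   the interval [x_i, x_i + i], of at most i + 1 nodes.  Hence a burning
   sequence of length b exists iff n <= 1 + 2 + ... + b = 'C(b + 1, 2): the
   bound is forced by counting, and it is attained by laying the intervals end
   to end, the longest one first.  The least such b is the stated ceiling,
   because x |-> sqrt(2x + 1/4) - 1/2 is increasing and maps 'C(k + 1, 2) to k. *)
From HB Require Import structures.
From mathcomp Require Import all_boot all_order all_algebra.
From mathcomp Require Import reals.
From mathcomp Require Import zify ring lra.

Set Implicit Arguments.
Unset Strict Implicit.
Unset Printing Implicit Defensive.

Import Order.TTheory GRing.Theory Num.Theory.

Lemma reach_le_dpath n k (v w : 'I_n) :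
  reach_le (dpath n) k v w = (v <= w <= v + k).
Proof.
elim: k w => [|k IH] w /=; first by rewrite addn0 -eqn_leq eq_sym.
rewrite IH; apply/idP/idP.
- case/orP; first by lia.
  by case/existsP => u /andP[]; rewrite IH /dpath => le_u /eqP /= ->; lia.
- move=> /andP[le_vw le_w].
  have [le_wk|lt_kw] := leqP w (v + k); first by apply/orP; left; lia.
  have lt_pred : w.-1 < n by apply: leq_ltn_trans (leq_pred w) (ltn_ord w).
  apply/orP; right; apply/existsP; exists (Ordinal lt_pred).
  by rewrite IH /dpath /=; apply/andP; split; [lia | apply/eqP; lia].
Qed.

Lemma sum_succ_bin2 k : \sum_(i < k) i.+1 = 'C(k.+1, 2).
Proof. by rewrite -bin2_sum big_nat_recl // big_mkord. Qed.

Lemma double_bin2 k : 2 * 'C(k.+1, 2) = k.+1 * k.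
Proof. by rewrite -mul_bin_diag bin1. Qed.

Lemma leq_card_bigcup (T : finType) (I : Type) (r : seq I) (P : pred I)
    (F : I -> {set T}) :
  #|\bigcup_(i <- r | P i) F i| <= \sum_(i <- r | P i) #|F i|.
Proof.
elim/big_rec2: _ => [|i m U _ le_Um]; first by rewrite cards0.
exact: leq_trans (leq_card_setU _ _).1 (leq_add _ le_Um).
Qed.

Lemma card_ord_itv n a k : #|[set w : 'I_n | a <= w <= a + k]| <= k.+1.
Proof.
rewrite cardE -(size_map val) -[k.+1](size_iota a).
apply: uniq_leq_size; first by rewrite map_inj_uniq ?enum_uniq //; exact: val_inj.
by move=> x /mapP[w]; rewrite mem_enum inE mem_iota => ? -> /=; lia.
Qed.

Lemma burning_seq_dpath_size n (s : seq 'I_n) :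
  burning_seq (dpath n) s -> n <= 'C((size s).+1, 2).
Proof.
case: n s => [//|n] s burn_s.
pose A i := [set w : 'I_n.+1 | nth ord0 s i <= w <= nth ord0 s i + i].
have cover_A : [set: 'I_n.+1] \subset \bigcup_(i < size s) A i.
  apply/subsetP => w _; have [i lt_is] := burn_s w.
  rewrite (set_nth_default ord0) // reach_le_dpath => burnt.
  by apply/bigcupP; exists (Ordinal lt_is); rewrite ?inE.
rewrite -sum_succ_bin2 -{1}[n.+1]card_ord -cardsT.
apply: leq_trans (subset_leq_card cover_A) _.
apply: leq_trans (leq_card_bigcup _ _ _) _.
by apply: leq_sum => i _; exact: card_ord_itv.
Qed.

(* Inductive step: the new interval [0, b] goes first, the old ones are shifted past it. *)
Lemma bin2_interval_cover b : exists p : nat -> nat,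
  forall w, w < 'C(b.+1, 2) -> exists2 i, i < b & p i <= w <= p i + i.
Proof.
elim: b => [|b [p cover_p]]; first by exists id.
exists (fun i => if i == b then 0 else p i + b.+1) => w.
rewrite binS bin1 => lt_w.
have [le_wb|lt_bw] := leqP w b; first by exists b; rewrite ?eqxx.
have [|i lt_ib le_w] := cover_p (w - b.+1); first by lia.
by exists i; [lia | rewrite ltn_eqF //; lia].
Qed.

Lemma dpath_burning_seq_exists n b : 0 < n -> n <= 'C(b.+1, 2) ->
  exists2 s : seq 'I_n, size s = b & burning_seq (dpath n) s.
Proof.
case: n => [//|n] _ le_n; have [p cover_p] := bin2_interval_cover b.
exists (mkseq (fun i => inord (minn (p i) n)) b); first exact: size_mkseq.
move=> w; have [|i lt_ib le_w] := cover_p w; first exact: leq_trans (ltn_ord w) le_n.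
exists i; first by rewrite size_mkseq.
have lt_wn := ltn_ord w.
rewrite nth_mkseq // reach_le_dpath inordK ?ltnS ?geq_minr //.
by rewrite (minn_idPl _) //; lia.
Qed.

Lemma is_burning_number_dpath n b : 0 < n -> n <= 'C(b.+1, 2) ->
  (forall k, n <= 'C(k.+1, 2) -> b <= k) -> is_burning_number (dpath n) b.
Proof.
move=> n_gt0 le_n min_b; split; last by move=> s /burning_seq_dpath_size /min_b.
by have [s] := dpath_burning_seq_exists n_gt0 le_n; exists s.
Qed.

Section Ceiling.
Local Open Scope ring_scope.

Lemma sqrt_double_bin2 (R : rcfType) k :
  Num.sqrt (2 * 'C(k.+1, 2)%:R + 1 / 4) = k%:R + 1 / 2 :> R.
Proof.
have -> : 2 * 'C(k.+1, 2)%:R + 1 / 4 = (k%:R + 1 / 2) ^+ 2 :> R.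
  by rewrite -natrM double_bin2 natrM -addn1 natrD; field.
by rewrite sqrtr_sqr ger0_norm // addr_ge0 ?divr_ge0.
Qed.

Lemma ceil_sqrt_bin2 (R : archiRcfType) k (x : R) :
  'C(k.+1, 2)%:R < x <= 'C(k.+2, 2)%:R ->
  Num.ceil (Num.sqrt (2 * x + 1 / 4) - 1 / 2) = k.+1%:Z.
Proof.
move=> /andP[lt_x le_x]; apply: ceil_def.
have x_gt0 : 0 < x by apply: le_lt_trans lt_x.
have -> : k.+1%:Z - 1 = k%:Z by rewrite -addn1 PoszD addrK.
rewrite -!pmulrn ltrBrDr lerBlDr -!sqrt_double_bin2 ltr_sqrt ?ler_sqrt; lra.
Qed.

End Ceiling.

Theorem mainTheorem3 (R : realType) (n : nat) : (1 <= n)%N ->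
  exists b : nat, is_burning_number (dpath n) b /\
    (b%:Z = Num.ceil (Num.sqrt (2 * n%:R + 1 / 4) - 1 / 2 : R))%R.
Proof.
move=> n_gt0.
have ex_b : exists b, n <= 'C(b.+1, 2).
  by exists n; rewrite -(leq_pmul2l (isT : 0 < 2)) double_bin2; nia.
have [b le_n min_b] := ex_minnP ex_b.
exists b; split; first exact: is_burning_number_dpath.
case: b le_n min_b => [|k] le_n min_b; first by rewrite bin_small in le_n; lia.
have lt_n : 'C(k.+1, 2) < n by rewrite ltnNge; apply/negP => /min_b; lia.
by rewrite (ceil_sqrt_bin2 (k := k)) // ltr_nat lt_n ler_nat.
Qed.
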